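(* Let $n\ge 1$, $m\ge 2$, $0\le k\le n-1$. The maximum possible size of a $k$-bounded acyclic CP-net over $n$ variables of domain size $m$ is $\mathcal{M}_k=(n-k)m^k+\frac{m^k-1}{m-1}$.
   Context: Variables $V=\{v_1,\dots,v_n\}$, each with a finite domain of size $m$. A CP-net specifies for each $v_i$ a parent set $Pa(v_i)\subseteq V\setminus\{v_i\}$ and a conditional preference table $\mathrm{CPT}(v_i)$ which, for each assignment $\gamma$ of values to the variables in $Pa(v_i)$, either contains one statement (a strict total order on the domain of $v_i$) or contains nothing; parents are non-dummy (each actually affects the preferences). The CP-net is acyclic if the graph with edges $(v_j,v_i)$ for $v_j\in Pa(v_i)$ is acyclic, and $k$-bounded if all $|Pa(v_i)|\le k$. The size of $\mathrm{CPT}(v_i)$ is its number of statements (at most $m^{|Pa(v_i)|}$), and the size of the CP-net is the sum of the sizes of its CPTs. *)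

From mathcomp Require Import all_boot all_fingroup.
Set Implicit Arguments. Unset Strict Implicit. Unset Printing Implicit Defensive.

(* Variables v_1..v_n are 'I_n, every domain is 'I_m.
   A strict total order on 'I_m is represented by a permutation p : {perm 'I_m}
   (p 0 is the most preferred value, p 1 the next, ...); this is a bijective
   encoding of strict total orders on a finite set. *)
Definition order_on (m : nat) := {perm 'I_m}.

(* An assignment gamma of values to the variables of a set P is encoded as a
   partial outcome g : {ffun 'I_n -> option 'I_m} whose support is exactly P. *)
Definition assigns (n m : nat) (P : {set 'I_n}) (g : {ffun 'I_n -> option 'I_m}) : bool :=
  [forall j, (g j != None) == (j \in P)].

Record CPnet (n m : nat) := mkCPnet {
  Pa  : 'I_n -> {set 'I_n};
  (* CPT(v_i): for each parent assignment, either one statement or nothing.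
     (values on non-assignments of Pa i are irrelevant) *)
  cpt : 'I_n -> {ffun 'I_n -> option 'I_m} -> option (order_on m)
}.

Definition CPnet_wf n m (N : CPnet n m) : Prop :=
  forall i : 'I_n, i \notin Pa N i /\
    forall j, j \in Pa N i ->
      exists g g' : {ffun 'I_n -> option 'I_m},
        [/\ assigns (Pa N i) g, assigns (Pa N i) g',
            (forall l, l != j -> g l = g' l) & cpt N i g != cpt N i g'].

Definition dep_edge n m (N : CPnet n m) : rel 'I_n := fun j i => j \in Pa N i.

Definition acyclic n m (N : CPnet n m) : Prop :=
  forall i j : 'I_n, dep_edge N j i -> ~~ connect (dep_edge N) i j.

Definition k_bounded n m (k : nat) (N : CPnet n m) : Prop :=
  forall i, #|Pa N i| <= k.

Definition cpt_size n m (N : CPnet n m) (i : 'I_n) : nat :=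
  #|[set g : {ffun 'I_n -> option 'I_m} | assigns (Pa N i) g & cpt N i g != None]|.

Definition cpnet_size n m (N : CPnet n m) : nat := \sum_(i < n) cpt_size N i.

Definition valid_kacyclic n m k (N : CPnet n m) : Prop :=
  [/\ CPnet_wf N, acyclic N & k_bounded k N].

From mathcomp Require Import all_boot all_fingroup.
Set Implicit Arguments. Unset Strict Implicit. Unset Printing Implicit Defensive.

(* Upper bound: a CPT with p parents has at most m^p statements, and an acyclic
   dependency graph always has a variable that is nobody's parent; removing it
   repeatedly lists the variables so that the j-th one from the bottom has at
   most min(j, k) parents among the earlier ones.  Summing m^min(j, k) over
   j < n gives the closed form.  Lower bound: the net in which v_i has parents
   v_0, ..., v_(min(i, k) - 1) and a full CPT attains that sum. *)

Lemma card_assigns n m (P : {set 'I_n}) :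
  #|[set g : {ffun 'I_n -> option 'I_m} | assigns P g]| = m ^ #|P|.
Proof.
have -> : [set g : {ffun 'I_n -> option 'I_m} | assigns P g] =
          [set g in pffun_on None P (predC1 None)].
  apply/setP => g; rewrite !inE; apply/forallP/pffun_onP => [gP|[suppP gP] j].
    split=> [|_ /imageP[j jP ->]]; last by rewrite inE (eqP (gP j)).
    by apply/subsetP => j; rewrite !inE (eqP (gP j)).
  apply/eqP; case jP: (j \in P); first by apply: gP; apply: image_f.
  by apply/negbTE; apply: contraFN jP => gj; apply: (subsetP suppP); rewrite inE.
by rewrite cardsE card_pffun_on cardC1 card_option card_ord.
Qed.

Lemma cpt_size_le n m (N : CPnet n m) i : cpt_size N i <= m ^ #|Pa N i|.
Proof.
rewrite /cpt_size -card_assigns; apply: subset_leq_card.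
by apply/subsetP => g; rewrite !inE => /andP[].
Qed.

Lemma cpt_size_total n m (N : CPnet n m) i :
  (forall g, cpt N i g != None) -> cpt_size N i = m ^ #|Pa N i|.
Proof.
move=> cpt_total; rewrite /cpt_size -card_assigns.
by apply: eq_card => g; rewrite !inE cpt_total andbT.
Qed.

(* The variable listed j-th in a topological order has at most min(j, k) parents. *)
Definition max_cpnet_size m k n := \sum_(j < n) m ^ minn j k.

Lemma max_cpnet_sizeS m k n :
  max_cpnet_size m k n.+1 = max_cpnet_size m k n + m ^ minn n k.
Proof. by rewrite /max_cpnet_size big_ord_recr. Qed.

Lemma max_cpnet_size_closed m k n : 1 < m -> k <= n ->
  max_cpnet_size m k n = (n - k) * m ^ k + (m ^ k - 1) %/ (m - 1).
Proof.
move=> m_gt1 /subnKC <-; rewrite addKn.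
have geometric : max_cpnet_size m k k = (m ^ k - 1) %/ (m - 1).
  rewrite subn1 predn_exp -subn1 mulKn ?subn_gt0 //.
  by apply: eq_bigr => j _; rewrite (minn_idPl (ltnW (ltn_ord j))).
elim: (n - k) => [|d IH]; first by rewrite addn0.
rewrite addnS max_cpnet_sizeS IH (minn_idPr (leq_addr _ _)) mulSn.
by rewrite addnAC [d * _ + _]addnC.
Qed.

Section AcyclicParents.

Variables (T : finType) (Pa : T -> {set T}).
Let dep : rel T := fun j i => j \in Pa i.
Hypothesis Pa_acyclic : forall i j, j \in Pa i -> ~~ connect dep i j.

Lemma Pa_irrefl i : i \notin Pa i.
Proof. by apply: contraTN (connect0 dep i) => /Pa_acyclic. Qed.

(* A vertex of S reaching the fewest vertices cannot be the parent of any
   w in S: w would reach strictly less. *)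
Lemma exists_sink (S : {set T}) v0 : v0 \in S ->
  exists2 v, v \in S & forall w, w \in S -> v \notin Pa w.
Proof.
move=> v0S; case: (arg_minnP (fun x => #|[set u | connect dep x u]|) v0S).
move=> v vS vmin; exists v => // w wS; apply/negP => vw.
have := vmin w wS; apply/negP; rewrite -ltnNge; apply: proper_card.
apply/properP; split.
  by apply/subsetP => u; rewrite !inE; apply: connect_trans; apply: connect1.
by exists v; rewrite !inE ?connect0 // (negbTE (Pa_acyclic vw)).
Qed.

Lemma sum_exp_card_parents_le m k (S : {set T}) :
  0 < m -> (forall i, #|Pa i| <= k) ->
  \sum_(i in S) m ^ #|Pa i :&: S| <= max_cpnet_size m k #|S|.
Proof.
move=> m_gt0 Pa_le_k; move cardS: #|S| => s; elim: s S cardS => [|s IH] S cardS.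
  by move/eqP: cardS; rewrite cards_eq0 => /eqP ->; rewrite big_set0.
have [v0 v0S] : exists v0, v0 \in S by apply/set0Pn; rewrite -card_gt0 cardS.
have [v vS v_sink] := exists_sink v0S.
have cardSv : #|S :\ v| = s by move: cardS; rewrite (cardsD1 v S) vS => -[].
rewrite (bigD1 v) //= max_cpnet_sizeS addnC; apply: leq_add.
  suff -> : \sum_(i in S | i != v) m ^ #|Pa i :&: S| =
            \sum_(i in S :\ v) m ^ #|Pa i :&: (S :\ v)| by exact: IH.
  apply: eq_big => [i|i /andP[iS _]]; first by rewrite !inE andbC.
  congr (m ^ _); apply: eq_card => u; rewrite !inE.
  by case: (u =P v) => // ->; rewrite (negbTE (v_sink i iS)).
rewrite leq_pexp2l // leq_min; apply/andP; split.
  rewrite -cardSv; apply/subset_leq_card/subsetP => u; rewrite !inE.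
  by case/andP=> uv ->; rewrite andbT; apply: contraTneq uv => ->; apply: Pa_irrefl.
exact: leq_trans (subset_leq_card (subsetIl _ _)) (Pa_le_k v).
Qed.

End AcyclicParents.

Lemma cpnet_size_le_max n m k (N : CPnet n m) :
  0 < m -> valid_kacyclic k N -> cpnet_size N <= max_cpnet_size m k n.
Proof.
move=> m_gt0 [_ N_acyclic N_bounded].
apply: (@leq_trans (\sum_(i < n) m ^ #|Pa N i|)).
  by apply: leq_sum => i _; apply: cpt_size_le.
have := sum_exp_card_parents_le N_acyclic [set: 'I_n] m_gt0 N_bounded.
rewrite cardsT card_ord; congr (_ <= _).
by apply: eq_big => [i|i _]; rewrite ?inE ?setIT.
Qed.

Lemma card_ord_lt n c : c <= n -> #|[set j : 'I_n | j < c]| = c.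
Proof.
move=> c_le_n; have widen_inj : injective (widen_ord c_le_n).
  by move=> a b /(congr1 val) ab; apply: val_inj.
rewrite -[c in RHS]card_ord -cardsT -(card_imset _ widen_inj).
apply: eq_card => j; rewrite inE; apply/idP/imsetP => [j_lt_c|[x _ ->]].
  by exists (Ordinal j_lt_c) => //; apply: val_inj.
by rewrite /= ltn_ord.
Qed.

Lemma connect_ltn_leq n (e : rel 'I_n) :
  (forall j i, e j i -> j < i) -> forall i j, connect e i j -> i <= j.
Proof.
move=> e_lt i j /connectP[p /(sub_path e_lt) ip ->].
have := mem_last i p; rewrite inE => /predU1P[-> //|j_in_p].
have ltn_ord_trans : transitive (fun a b : 'I_n => a < b).
  by move=> b a c; apply: ltn_trans.
by apply: ltnW; apply: (allP (order_path_min ltn_ord_trans ip)).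
Qed.

Section ChainNet.

Variables (n m k : nat).
Hypothesis m_gt1 : 1 < m.

Definition chain_parents (i : 'I_n) : {set 'I_n} := [set j : 'I_n | j < minn i k].

(* Switching the order as soon as some parent leaves value 0 makes every parent
   non-dummy. *)
Definition chain_cpt (i : 'I_n) (g : {ffun 'I_n -> option 'I_m}) : option (order_on m) :=
  let a0 := Ordinal (ltnW m_gt1) in let a1 := Ordinal m_gt1 in
  Some (if [forall l in chain_parents i, g l == Some a0] then 1%g else tperm a0 a1).

Definition chain_net : CPnet n m := mkCPnet chain_parents chain_cpt.

Lemma card_chain_parents i : #|chain_parents i| = minn i k.
Proof. by apply: card_ord_lt; rewrite geq_min ltnW. Qed.

Lemma chain_net_wf : CPnet_wf chain_net.
Proof.
move=> i; split=> [|j j_par /=]; first by rewrite inE -leqNgt geq_minl.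
set P := chain_parents i; set a0 := Ordinal (ltnW m_gt1); set a1 := Ordinal m_gt1.
set g := [ffun l => if l \in P then Some a0 else None].
set g' := [ffun l => if l \in P then Some (if l == j then a1 else a0) else None].
exists g, g'; split.
- by apply/forallP => l; rewrite ffunE; case: (l \in P).
- by apply/forallP => l; rewrite ffunE; case: (l \in P).
- by move=> l /negbTE lj; rewrite !ffunE lj.
have g_base : [forall l in P, g l == Some a0].
  by apply/forall_inP => l lP; rewrite ffunE lP.
have g'_not_base : ~~ [forall l in P, g' l == Some a0].
  by apply/forall_inPn; exists j; rewrite // ffunE j_par eqxx.
rewrite /chain_cpt -/P -/a0 -/a1 g_base (negbTE g'_not_base).
by apply/eqP => -[/permP/(_ a0)]; rewrite perm1 tpermL => /(congr1 val).
Qed.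

Lemma chain_net_acyclic : acyclic chain_net.
Proof.
have chain_lt j i : dep_edge chain_net j i -> j < i.
  by rewrite /dep_edge inE => /leq_trans; apply; apply: geq_minl.
move=> i j /chain_lt j_lt_i; apply/negP => /(connect_ltn_leq chain_lt).
by rewrite leqNgt j_lt_i.
Qed.

Lemma chain_net_k_bounded : k_bounded k chain_net.
Proof. by move=> i; rewrite /= card_chain_parents geq_minr. Qed.

Lemma chain_net_size : cpnet_size chain_net = max_cpnet_size m k n.
Proof.
apply: eq_bigr => i _.
by rewrite cpt_size_total //= card_chain_parents.
Qed.

End ChainNet.

Theorem lemma1 (n m k : nat) (Hn : 1 <= n) (Hm : 2 <= m) (Hk : k <= n - 1) :
  (forall N : CPnet n m, valid_kacyclic k N ->
     cpnet_size N <= (n - k) * m ^ k + (m ^ k - 1) %/ (m - 1)) /\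
  (exists N : CPnet n m, valid_kacyclic k N /\
     cpnet_size N = (n - k) * m ^ k + (m ^ k - 1) %/ (m - 1)).
Proof.
have k_le_n : k <= n by apply: leq_trans Hk (leq_subr _ _).
rewrite -max_cpnet_size_closed //; split.
  by move=> N; apply: cpnet_size_le_max; apply: ltnW.
exists (chain_net n k Hm); split; last exact: chain_net_size.
split; [exact: chain_net_wf | exact: chain_net_acyclic | exact: chain_net_k_bounded].
Qed.
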